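(* The Mixing method $M_\theta$ with a step size $\theta\in\left(0,\frac{1}{\max_i\|c_i\|_1}\right)$ never degenerates. That is, there is a constant $\delta\in(0,1)$ such that $\|\theta Vc_i\|\le1-\delta<1$ and $\|v_i-\theta Vc_i\|\ge\delta>0$.
   Context: Let $C\in\mathbb{R}^{n\times n}$ be symmetric with columns $c_i$ and $c_{ii}=0$; $V\in\mathbb{R}^{k\times n}$ has unit-norm columns $v_i$ ($\|\cdot\|$ the Euclidean norm, $\|\cdot\|_1$ the $1$-norm). The Mixing method with step size $\theta$, $M_\theta$, cyclically for $i=1,\ldots,n$ sets $v_i:=(v_i-\theta\sum_j c_{ij}v_j)/\|v_i-\theta\sum_j c_{ij}v_j\|$ using the most recent values of the $v_j$; the statement applies to every such (feasible) $V$ encountered. *)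

From HB Require Import structures.
From mathcomp Require Import all_boot all_order all_algebra.
Set Implicit Arguments. Unset Strict Implicit. Unset Printing Implicit Defensive.
Import Order.TTheory GRing.Theory Num.Theory.
Local Open Scope ring_scope.

Definition enorm (R : rcfType) (k : nat) (x : 'cV[R]_k) : R :=
  Num.sqrt (\sum_(i < k) x i 0 ^+ 2).

Definition norm1 (R : rcfType) (k : nat) (x : 'cV[R]_k) : R :=
  \sum_(i < k) `|x i 0|.

(* max_i ||c_i||_1 over the columns c_i of C (0 if n = 0). *)
Definition max_col_norm1 (R : rcfType) (n : nat) (C : 'M[R]_n) : R :=
  \big[Num.max/0]_(i < n) norm1 (col i C).

Definition unit_columns (R : rcfType) (k n : nat) (V : 'M[R]_(k, n)) : Prop :=
  forall j : 'I_n, enorm (col j V) = 1.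

From HB Require Import structures.
From mathcomp Require Import all_boot all_order all_algebra.
From mathcomp Require Import ring lra.
Set Implicit Arguments. Unset Strict Implicit. Unset Printing Implicit Defensive.
Import Order.TTheory GRing.Theory Num.Theory.
Local Open Scope ring_scope.

(* Every column of V has norm 1, so V c is a combination of unit vectors with
   coefficients c_j and the triangle inequality gives ||V c|| <= ||c||_1.
   Hence ||theta V c_i|| <= theta max_j ||c_j||_1 < 1, and by the reverse
   triangle inequality ||v_i - theta V c_i|| >= 1 - theta max_j ||c_j||_1. *)

Section EuclideanNorm.
Variables (R : rcfType) (k : nat).
Implicit Types (x y : 'cV[R]_k) (u w : 'I_k -> R).

Lemma lagrange_identity u w :
  \sum_i \sum_j (u i * w j - u j * w i) ^+ 2 =
  2 * ((\sum_i u i ^+ 2) * (\sum_i w i ^+ 2) - (\sum_i u i * w i) ^+ 2).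
Proof.
have -> : \sum_i \sum_j (u i * w j - u j * w i) ^+ 2 =
  \sum_i \sum_j (u i ^+ 2 * w j ^+ 2) + \sum_i \sum_j (u j ^+ 2 * w i ^+ 2)
  - 2 * \sum_i \sum_j (u i * w i * (u j * w j)).
  rewrite -big_split /= mulr_sumr -sumrN -big_split /=.
  apply: eq_bigr => i _; rewrite -big_split /= mulr_sumr -sumrN -big_split /=.
  by apply: eq_bigr => j _; ring.
rewrite (exchange_big _ _ _ _ _ (fun i j => u j ^+ 2 * w i ^+ 2)) /=.
have sum_sqr_mul : \sum_i \sum_j (u i ^+ 2 * w j ^+ 2) =
    (\sum_i u i ^+ 2) * (\sum_i w i ^+ 2).
  by rewrite mulr_suml; apply: eq_bigr => i _; rewrite mulr_sumr.
have sqr_sum : \sum_i \sum_j (u i * w i * (u j * w j)) = (\sum_i u i * w i) ^+ 2.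
  by rewrite expr2 mulr_suml; apply: eq_bigr => i _; rewrite mulr_sumr.
by rewrite sum_sqr_mul sqr_sum; ring.
Qed.

Lemma cauchy_schwarz u w :
  (\sum_i u i * w i) ^+ 2 <= (\sum_i u i ^+ 2) * (\sum_i w i ^+ 2).
Proof.
have : 0 <= \sum_i \sum_j (u i * w j - u j * w i) ^+ 2.
  by do 2![apply: sumr_ge0 => ? _]; apply: sqr_ge0.
rewrite lagrange_identity -subr_ge0; lra.
Qed.

Lemma sumsqr_ge0 x : 0 <= \sum_i x i 0 ^+ 2.
Proof. by apply: sumr_ge0 => i _; apply: sqr_ge0. Qed.

Lemma enorm_ge0 x : 0 <= enorm x.
Proof. exact: sqrtr_ge0. Qed.

Lemma sqr_enorm x : enorm x ^+ 2 = \sum_i x i 0 ^+ 2.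
Proof. by rewrite sqr_sqrtr ?sumsqr_ge0. Qed.

Lemma dot_le_enorm x y : \sum_i x i 0 * y i 0 <= enorm x * enorm y.
Proof.
rewrite -sqrtrM ?sumsqr_ge0 //; apply: le_trans (ler_norm _) _.
rewrite -sqrtr_sqr ler_sqrt ?mulr_ge0 ?sumsqr_ge0 //.
exact: (cauchy_schwarz (fun i => x i 0) (fun i => y i 0)).
Qed.

Lemma enormD x y : enorm (x + y) <= enorm x + enorm y.
Proof.
rewrite -(ger0_norm (addr_ge0 (enorm_ge0 x) (enorm_ge0 y))) -sqrtr_sqr.
rewrite ler_sqrt ?sqr_ge0 // sqrrD !sqr_enorm.
have -> : \sum_i (x + y) i 0 ^+ 2 =
    \sum_i x i 0 ^+ 2 + (\sum_i x i 0 * y i 0) *+ 2 + \sum_i y i 0 ^+ 2.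
  by rewrite -sumrMnl -!big_split /=; apply: eq_bigr => i _; rewrite !mxE; ring.
by rewrite lerD2r lerD2l lerMn2r /= dot_le_enorm.
Qed.

Lemma enorm0 : enorm (0 : 'cV[R]_k) = 0.
Proof. by rewrite /enorm big1 ?sqrtr0 // => i _; rewrite mxE expr0n. Qed.

Lemma enormZ a x : enorm (a *: x) = `|a| * enorm x.
Proof.
rewrite /enorm -sqrtr_sqr -sqrtrM ?sqr_ge0 // mulr_sumr.
by congr Num.sqrt; apply: eq_bigr => i _; rewrite !mxE exprMn.
Qed.

Lemma lerB_enorm_dist x y : enorm x - enorm y <= enorm (x - y).
Proof. by rewrite lerBlDr -{1}(subrK y x) enormD. Qed.

Lemma enorm_sum (I : finType) (F : I -> 'cV[R]_k) :
  enorm (\sum_i F i) <= \sum_i enorm (F i).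
Proof.
apply: (big_ind2 (fun v r => enorm v <= r)) => [|x a y b lexa leyb|//].
  by rewrite enorm0.
exact: le_trans (enormD x y) (lerD lexa leyb).
Qed.

End EuclideanNorm.

Lemma mulmx_sum_col (R : comPzRingType) m n (A : 'M[R]_(m, n)) (c : 'cV[R]_n) :
  A *m c = \sum_j c j 0 *: col j A.
Proof.
apply/colP => i; rewrite !mxE summxE; apply: eq_bigr => j _.
by rewrite !mxE mulrC.
Qed.

Lemma enorm_mulmx_le_norm1 (R : rcfType) k n (V : 'M[R]_(k, n)) (c : 'cV[R]_n) :
  unit_columns V -> enorm (V *m c) <= norm1 c.
Proof.
move=> unitV; rewrite mulmx_sum_col; apply: le_trans (enorm_sum _) _.
by apply: ler_sum => j _; rewrite enormZ unitV mulr1.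
Qed.

Lemma norm1_col_le_max (R : rcfType) n (C : 'M[R]_n) i :
  norm1 (col i C) <= max_col_norm1 C.
Proof. exact: le_bigmax. Qed.

Lemma max_col_norm1_ge0 (R : rcfType) n (C : 'M[R]_n) : 0 <= max_col_norm1 C.
Proof. exact: bigmax_ge_id. Qed.

Theorem lemma13 (R : rcfType) (k n : nat) (C : 'M[R]_n) (theta : R) :
  C^T = C ->
  (forall i : 'I_n, C i i = 0) ->
  0 < theta -> theta * max_col_norm1 C < 1 ->
  exists delta : R, 0 < delta < 1 /\
    forall V : 'M[R]_(k, n), unit_columns V ->
      forall i : 'I_n,
        enorm (theta *: (V *m col i C)) <= 1 - delta /\
        delta <= enorm (col i V - theta *: (V *m col i C)).
Proof.
move=> _ _ theta_gt0 theta_m_lt1.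
have theta_m_ge0 : 0 <= theta * max_col_norm1 C.
  exact: mulr_ge0 (ltW theta_gt0) (max_col_norm1_ge0 C).
(* Halved so that delta < 1 also when C = 0. *)
exists ((1 - theta * max_col_norm1 C) / 2); split; first by apply/andP; split; lra.
move=> V unitV i.
have step_le : enorm (theta *: (V *m col i C)) <= theta * max_col_norm1 C.
  rewrite enormZ gtr0_norm // ler_pM2l //.
  exact: le_trans (enorm_mulmx_le_norm1 _ unitV) (norm1_col_le_max C i).
have := lerB_enorm_dist (col i V) (theta *: (V *m col i C)).
by rewrite unitV; split; lra.
Qed.
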